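(* For any $F\in\mathscr{F}_{\mathrm{opt}}\cap\mathscr{F}_2$, there exists $i\in\mathcal{R}_F$ such that $|\mathcal{P}^2_{F,i}|=4$.
   Context: $\mathcal{S}$ is a finite source alphabet with $|\mathcal{S}|\ge 2$ and $\mathcal{C}=\{0,1\}$; $\mathcal{A}^k,\mathcal{A}^{\ast},\mathcal{A}^{+}$ are sequences of length $k$, finite, positive finite length; $\lambda$ empty sequence; $\preceq$ prefix, $\prec$ proper prefix; $\mathrm{suff}(x_1\cdots x_n)=x_2\cdots x_n$. A code-tuple $F$ with $m\ge1$ code tables consists of maps $f_i:\mathcal{S}\to\mathcal{C}^{\ast}$ and $\tau_i:\mathcal{S}\to\{0,\dots,m-1\}$, $i\in[F]=\{0,\dots,m-1\}$. $f_i^{\ast}(\lambda)=\lambda$, $\tau_i^{\ast}(\lambda)=i$, and for $\pmb{x}=x_1\cdots x_n\ne\lambda$, $f_i^{\ast}(\pmb{x})=f_i(x_1)f^{\ast}_{\tau_i(x_1)}(\mathrm{suff}(\pmb{x}))$, $\tau_i^{\ast}(\pmb{x})=\tau^{\ast}_{\tau_i(x_1)}(\mathrm{suff}(\pmb{x}))$. For integer $k\ge0$, $\pmb{b}\in\mathcal{C}^{\ast}$: $\mathcal{P}^k_{F,i}(\pmb{b})$ is the set of $\pmb{c}\in\mathcal{C}^k$ such that some $\pmb{x}=x_1\cdots x_n\in\mathcal{S}^{+}$ has $f_i^{\ast}(\pmb{x})\succeq\pmb{b}\pmb{c}$ and $f_i(x_1)\succeq\pmb{b}$; $\bar{\mathcal{P}}^k_{F,i}(\pmb{b})$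 the same with $f_i(x_1)\succ\pmb{b}$; $\mathcal{P}^k_{F,i}=\mathcal{P}^k_{F,i}(\lambda)$. $F\in\mathscr{F}_{2\text{-}\mathrm{dec}}$ if $\mathcal{P}^2_{F,\tau_i(s)}\cap\bar{\mathcal{P}}^2_{F,i}(f_i(s))=\emptyset$ for all $i,s$, and $\mathcal{P}^2_{F,\tau_i(s)}\cap\mathcal{P}^2_{F,\tau_i(s')}=\emptyset$ whenever $s\ne s'$, $f_i(s)=f_i(s')$. $F\in\mathscr{F}_{\mathrm{ext}}$ if $\mathcal{P}^1_{F,i}\ne\emptyset$ for all $i$. Fix $\mu:\mathcal{S}\to(0,1]$ with $\sum_s\mu(s)=1$; $Q(F)$ has entries $Q_{i,j}(F)=\sum_{s:\tau_i(s)=j}\mu(s)$; $F\in\mathscr{F}_{\mathrm{reg}}$ if $\pmb{\pi}Q(F)=\pmb{\pi}$, $\sum_i\pi_i=1$ has a unique solution $\pmb{\pi}(F)$; then $L(F)=\sum_i\pi_i(F)\sum_s|f_i(s)|\mu(s)$. $\mathscr{F}_0=\mathscr{F}_{\mathrm{reg}}\cap\mathscr{F}_{\mathrm{ext}}\cap\mathscr{F}_{2\text{-}\mathrm{dec}}$; $\mathscr{F}_{\mathrm{opt}}$ is the set of $F\in\mathscr{F}_0$ with $L(F)\le L(F')$ for all $F'\in\mathscr{F}_0$. $\mathscr{F}_2=\{F\in\mathscr{F}_{\mathrm{reg}}\cap\mathscr{F}_{2\text{-}\mathrm{dec}}:|\mathcal{P}^2_{F,i}|\ge3\ \forall i\in[F]\}$.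 $\mathcal{R}_F=\{i\in[F]:\text{for every }j\in[F]\text{ there is }\pmb{x}\in\mathcal{S}^{\ast}\text{ with }\tau^{\ast}_j(\pmb{x})=i\}$. *)

From HB Require Import structures.
From mathcomp Require Import all_boot all_order all_algebra.
From mathcomp Require Import boolp reals.

Import Order.TTheory GRing.Theory Num.Theory.
Local Open Scope ring_scope.

(* A code-tuple over source alphabet S with code alphabet C = bool.
   It has (ct_m F).+1 >= 1 code tables, indexed by 'I_(ct_m F).+1. *)
Record codetuple (S : finType) := CodeTuple {
  ct_m : nat;
  ct_f : 'I_ct_m.+1 -> S -> seq bool;
  ct_tau : 'I_ct_m.+1 -> S -> 'I_ct_m.+1 }.

Arguments ct_m {S} c.
Arguments ct_f {S} c _ _.
Arguments ct_tau {S} c _ _.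

Section CodeTuples.
Variable S : finType.
Implicit Type F : codetuple S.

Fixpoint fstar F (i : 'I_(ct_m F).+1) (x : seq S) : seq bool :=
  match x with
  | [::] => [::]
  | s :: x' => ct_f F i s ++ fstar F (ct_tau F i s) x'
  end.

Fixpoint taustar F (i : 'I_(ct_m F).+1) (x : seq S) : 'I_(ct_m F).+1 :=
  match x with
  | [::] => i
  | s :: x' => taustar F (ct_tau F i s) x'
  end.

Definition Pset F (k : nat) (i : 'I_(ct_m F).+1) (b : seq bool)
  : {set k.-tuple bool} :=
  [set c | `[< exists (s : S) (x : seq S),
      prefix (b ++ val c) (fstar F i (s :: x)) /\ prefix b (ct_f F i s) >]].

Definition Pbarset F (k : nat) (i : 'I_(ct_m F).+1) (b : seq bool)
  : {set k.-tuple bool} :=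
  [set c | `[< exists (s : S) (x : seq S),
      prefix (b ++ val c) (fstar F i (s :: x)) /\
      (prefix b (ct_f F i s) && (b != ct_f F i s)) >]].

Definition P0 F (k : nat) (i : 'I_(ct_m F).+1) := Pset F k i [::].

Definition is_2dec F : Prop :=
  (forall i s, P0 F 2 (ct_tau F i s) :&: Pbarset F 2 i (ct_f F i s) = set0) /\
  (forall i s s', s != s' -> ct_f F i s = ct_f F i s' ->
     P0 F 2 (ct_tau F i s) :&: P0 F 2 (ct_tau F i s') = set0).

Definition is_ext F : Prop := forall i, P0 F 1 i != set0.

Variable R : realType.
Variable mu : S -> R.

Definition Qmat F (i j : 'I_(ct_m F).+1) : R :=
  \sum_(s | ct_tau F i s == j) mu s.

Definition stationary F (pi : 'I_(ct_m F).+1 -> R) : Prop :=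
  (forall j, \sum_i pi i * Qmat F i j = pi j) /\ \sum_i pi i = 1.

Definition is_reg F : Prop := exists! pi, stationary F pi.

(* L(F), computed from the (unique, for F regular) stationary solution pi *)
Definition Lw F (pi : 'I_(ct_m F).+1 -> R) : R :=
  \sum_i pi i * \sum_s (size (ct_f F i s))%:R * mu s.

Definition in_F0 F : Prop := is_reg F /\ is_ext F /\ is_2dec F.

(* F in F_opt: F in F_0 and L(F) <= L(F') for all F' in F_0, where
   L(F) = Lw F pi(F) with pi(F) the unique stationary solution. *)
Definition in_Fopt F : Prop :=
  in_F0 F /\
  forall F' : codetuple S, in_F0 F' ->
    forall pi pi', stationary F pi -> stationary F' pi' -> Lw F pi <= Lw F' pi'.

Definition in_F2 F : Prop :=
  is_reg F /\ is_2dec F /\ forall i, (3 <= #|P0 F 2 i|)%N.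

End CodeTuples.

Definition RF (S : finType) (F : codetuple S) (i : 'I_(ct_m F).+1) : Prop :=
  forall j : 'I_(ct_m F).+1, exists x : seq S, taustar S F j x = i.

(* Take a stationary distribution pi, a table j with pi j > 0 and a symbol s0
   whose codeword f_j(s0) is a leaf of table j (no codeword of table j properly
   extends it); then i0 := tau_j(s0) has positive mass and is therefore
   recurrent.  If |P^2_{F,i0}| = 3 and ab is the missing pair, every codeword
   of table i0 is non-empty, differs from [a], and continues a with ~b, so this
   second bit is redundant.  Adding a copy of table i0 with that bit deleted,
   entered instead of i0 after leaf transitions, gives a code-tuple in F_0 whose
   stationary distribution projects onto pi and whose average length is smaller
   by (mass of the new table) * (expected number of deleted bits) > 0,
   contradicting optimality. *)

From HB Require Import structures.
From mathcomp Require Import all_boot all_order all_algebra.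
From mathcomp Require Import boolp reals.
From mathcomp Require Import zify.
Import Order.TTheory GRing.Theory Num.Theory.
Local Open Scope ring_scope.
Set Implicit Arguments. Unset Strict Implicit. Unset Printing Implicit Defensive.

Lemma ler_term_sum (R : numDomainType) (I : finType) (F : I -> R) j :
  (forall i, 0 <= F i) -> F j <= \sum_i F i.
Proof. by move=> F0; rewrite (bigD1 j) //= lerDl sumr_ge0. Qed.

Lemma sumr_delta (R : pzSemiRingType) (I : finType) (d : I) (c : I -> R) :
  \sum_j (d == j)%:R * c j = c d.
Proof.
rewrite (bigD1 d) //= eqxx mul1r big1 ?addr0 // => j; rewrite eq_sym => /negbTE ->.
by rewrite mul0r.
Qed.

Lemma exists_neq (T : finType) (x : T) : (1 < #|T|)%N -> exists y, y != x.
Proof.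
rewrite -cardsT => /card_gt1P [y [z [_ _ yz]]].
by case: (eqVneq y x) => [<-|]; [exists z; rewrite eq_sym | exists y].
Qed.

Lemma take_cat_succ (T : eqType) k (d r r' : seq T) : d != [::] ->
  take k r = take k r' -> take k.+1 (d ++ r) = take k.+1 (d ++ r').
Proof.
case: d => [|x d] // _ e /=; congr cons; rewrite !take_cat.
case: ltnP => // le_d_k; congr (_ ++ _).
by rewrite -(take_takel r (leq_subr (size d) k)) e take_takel ?leq_subr.
Qed.

Lemma take1_cat (T : eqType) (w r : seq T) : w != [::] -> take 1 (w ++ r) = take 1 w.
Proof. by case: w => [|x w] //= _; rewrite !take0. Qed.

Lemma card_tuple2 : #|{: 2.-tuple bool}| = 4%N.
Proof. by rewrite card_tuple card_bool. Qed.

Lemma tuple2P (c : 2.-tuple bool) : exists a b, c = [tuple a; b].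
Proof. by case: c => [[|a [|b [|]]]] // ?; exists a, b; apply: val_inj. Qed.

Lemma eq_tuple2 (a b a' b' : bool) :
  ([tuple a; b] == [tuple a'; b']) = (a == a') && (b == b').
Proof. by rewrite -val_eqE /= !eqseq_cons andbT. Qed.

Lemma card3_tuple2 (A : {set 2.-tuple bool}) :
  #|A| = 3%N -> exists a b, A = ~: [set [tuple a; b]].
Proof.
move=> cardA; have /set0Pn [c] : ~: A != set0.
  by rewrite -card_gt0; have := cardsC A; rewrite cardA card_tuple2; lia.
rewrite inE => cA; have [a [b c_ab]] := tuple2P c; exists a, b.
apply/eqP; rewrite eqEcard cardsC1 card_tuple2 cardA leqnn andbT -c_ab.
by apply/subsetP => x xA; rewrite !inE; apply: contraNneq cA => <-.
Qed.

Section StochasticMatrix.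
Variables (R : realFieldType) (n : nat) (Q : 'I_n.+1 -> 'I_n.+1 -> R).
Hypothesis Q_ge0 : forall i j, 0 <= Q i j.
Hypothesis sum_Q : forall i, \sum_j Q i j = 1.

Lemma stochastic_invariant_vector :
  exists2 v : 'I_n.+1 -> R, exists i, v i != 0 & forall j, \sum_i v i * Q i j = v j.
Proof.
pose A : 'M[R]_n.+1 := \matrix_(i, j) Q i j.
have /det0P [v v_neq0 vA] : \det (A - 1%:M) == 0.
  rewrite -det_tr; apply/det0P; exists (const_mx 1 : 'rV_n.+1).
    by apply/eqP => /matrixP /(_ 0 0); rewrite !mxE => /eqP; rewrite oner_eq0.
  apply/matrixP => i j; rewrite !mxE.
  under eq_bigr do rewrite !mxE mul1r -[_%:R]mulr1.
  by rewrite sumrB sum_Q sumr_delta subrr.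
exists (v 0).
  apply/existsP; apply: contraNT v_neq0 => /existsPn v0; apply/eqP/matrixP => i j.
  by rewrite ord1 mxE; apply/eqP; rewrite -[_ == _]negbK v0.
move=> j; move: vA; rewrite mulmxBr mulmx1 => /eqP; rewrite subr_eq0 => /eqP.
by move/matrixP/(_ 0 j); rewrite !mxE; under eq_bigr do rewrite mxE.
Qed.

Lemma stochastic_subinvariant_eq (w : 'I_n.+1 -> R) :
  (forall j, w j <= \sum_i w i * Q i j) -> forall j, \sum_i w i * Q i j = w j.
Proof.
move=> w_le j; apply/eqP; rewrite -subr_eq0; apply/eqP.
apply: (@psumr_eq0P _ _ predT (fun j => \sum_i w i * Q i j - w j)) => // [k _|].
  by rewrite subr_ge0.
rewrite sumrB exchange_big /=.
under eq_bigr do rewrite -mulr_sumr sum_Q mulr1.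
by rewrite subrr.
Qed.

Lemma stochastic_stationary : exists p : 'I_n.+1 -> R,
  [/\ forall i, 0 <= p i, \sum_i p i = 1 & forall j, \sum_i p i * Q i j = p j].
Proof.
have [v [i0 vi0] vQ] := stochastic_invariant_vector.
pose w i := `|v i|.
have w_inv : forall j, \sum_i w i * Q i j = w j.
  apply: stochastic_subinvariant_eq => j; rewrite /w -{1}vQ.
  apply: le_trans (ler_norm_sum _ _ _) _.
  by apply: ler_sum => i _; rewrite normrM (ger0_norm (Q_ge0 _ _)).
have w_ge0 i : 0 <= w i by exact: normr_ge0.
have W_gt0 : 0 < \sum_i w i.
  by apply: lt_le_trans (ler_term_sum i0 w_ge0); rewrite normr_gt0.
exists (fun i => w i / \sum_k w k); split.
- by move=> i; apply: divr_ge0 => //; apply: ltW.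
- by rewrite -mulr_suml divff // gt_eqF.
- by move=> j; rewrite -w_inv mulr_suml; apply: eq_bigr => i _; rewrite mulrAC.
Qed.

End StochasticMatrix.

Lemma taustar_cat (S : finType) (F : codetuple S) i x y :
  taustar S F i (x ++ y) = taustar S F (taustar S F i x) y.
Proof. by elim: x i => //= s x IH i. Qed.

Section Stationary.
Variables (R : realType) (S : finType) (mu : S -> R).
Hypothesis mu_gt0 : forall s, 0 < mu s.
Hypothesis sum_mu : \sum_s mu s = 1.
Local Notation Qmat := (Qmat S R mu).
Local Notation stationary := (stationary S R mu).
Local Notation is_reg := (is_reg S R mu).

Lemma Qmat_ge0 F i j : 0 <= Qmat F i j.
Proof. by apply: sumr_ge0 => s _; apply: ltW. Qed.

Lemma sum_Qmat F i : \sum_j Qmat F i j = 1.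
Proof. by rewrite -sum_mu (partition_big (ct_tau F i) predT). Qed.

Lemma Qmat_ge_mu F i s : mu s <= Qmat F i (ct_tau F i s).
Proof.
by rewrite /Qmat (bigD1 s) //= lerDl sumr_ge0 // => s' _; apply: ltW.
Qed.

Lemma exists_stationary_on F (D : {set 'I_(ct_m F).+1}) d0 :
  d0 \in D -> (forall i s, i \in D -> ct_tau F i s \in D) ->
  exists pi, [/\ stationary F pi, forall i, 0 <= pi i & forall i, i \notin D -> pi i = 0].
Proof.
move=> d0D closD.
(* rows outside D are redirected to d0, so no stationary mass can sit outside D *)
pose Q i j := if i \in D then Qmat F i j else (d0 == j)%:R.
have Q_ge0 i j : 0 <= Q i j by rewrite /Q; case: ifP => _; rewrite ?Qmat_ge0 ?ler0n.
have sum_Q i : \sum_j Q i j = 1.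
  rewrite /Q; case: (i \in D); first exact: sum_Qmat.
  by under eq_bigr do rewrite -[_%:R]mulr1; rewrite sumr_delta.
have [p [p_ge0 sum_p pQ]] := stochastic_stationary Q_ge0 sum_Q.
have p_out i : i \notin D -> p i = 0.
  move=> iD; rewrite -pQ big1 // => k _; rewrite /Q.
  case: ifP => kD; last by rewrite (negbTE (contraNneq _ iD)) ?mulr0 // => <-.
  rewrite /Qmat big_pred0 ?mulr0 // => s; apply/negbTE.
  by apply: contraNneq iD => <-; apply: closD.
exists p; split=> //; split=> // j; rewrite -pQ; apply: eq_bigr => i _.
by rewrite /Q; case: ifP => // /negbT /p_out ->; rewrite !mul0r.
Qed.

Lemma exists_stationary F : exists pi, stationary F pi /\ forall i, 0 <= pi i.
Proof.
have [pi [st pi_ge0 _]] :=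
  @exists_stationary_on F setT ord0 (in_setT _) (fun _ _ _ => in_setT _).
by exists pi.
Qed.

Lemma reg_stationary_uniq F p1 p2 : is_reg F ->
  stationary F p1 -> stationary F p2 -> p1 = p2.
Proof. by case=> p [_ p_uniq] /p_uniq <- /p_uniq <-. Qed.

Lemma reg_stationary_recurrent F pi j : is_reg F ->
  stationary F pi -> pi j != 0 -> RF S F j.
Proof.
move=> reg st pi_j k.
pose D := [set v | `[< exists x, taustar S F k x = v >]].
have kD : k \in D by rewrite inE; apply/asboolP; exists [::].
have closD i s : i \in D -> ct_tau F i s \in D.
  rewrite !inE => /asboolP [x hx]; apply/asboolP; exists (x ++ [:: s]).
  by rewrite taustar_cat hx.
have [p [stp _ p_out]] := exists_stationary_on kD closD.
rewrite (reg_stationary_uniq reg st stp) in pi_j.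
have : j \in D by apply: contraNT pi_j => /p_out ->.
by rewrite inE => /asboolP.
Qed.

Lemma stationary_tau_gt0 F pi i s : stationary F pi -> (forall k, 0 <= pi k) ->
  0 < pi i -> 0 < pi (ct_tau F i s).
Proof.
move=> [pQ _] pi_ge0 pi_i; rewrite -pQ.
have term_ge0 k : 0 <= pi k * Qmat F k (ct_tau F i s) by rewrite mulr_ge0 ?Qmat_ge0.
apply: lt_le_trans (ler_term_sum i term_ge0).
by rewrite mulr_gt0 // (lt_le_trans (mu_gt0 s) (Qmat_ge_mu i s)).
Qed.

End Stationary.

Section CodeTuple.
Variables (S : finType) (F : codetuple S).
Local Notation f := (ct_f F).
Local Notation tau := (ct_tau F).
Local Notation fstar := (fstar S F).
Local Notation P0 := (P0 S F).

Lemma fstar_cons i s x : fstar i (s :: x) = f i s ++ fstar (tau i s) x.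
Proof. by []. Qed.

Lemma P0P k i (c : k.-tuple bool) :
  reflect (exists s x, take k (fstar i (s :: x)) = val c) (c \in P0 k i).
Proof.
rewrite inE; apply: (iffP (asboolP _)) => [[s [x [h _]]]|[s [x h]]].
  by exists s, x; move: h; rewrite cat0s prefixE size_tuple => /eqP.
by exists s, x; rewrite cat0s prefixE size_tuple h prefix0s.
Qed.

Lemma PbarsetP k i b (c : k.-tuple bool) :
  reflect (exists s x, [/\ prefix (b ++ val c) (fstar i (s :: x)),
                          prefix b (f i s) & b != f i s])
          (c \in Pbarset S F k i b).
Proof.
rewrite inE; apply: (iffP (asboolP _)) => [[s [x [h /andP [h1 h2]]]]|[s [x [h h1 h2]]]].
  by exists s, x.
by exists s, x; rewrite h1 h2.
Qed.

Definition is_leaf j s :=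
  (f j s != [::]) && [forall s', prefix (f j s) (f j s') ==> (f j s' == f j s)].

Lemma Pbarset_leaf k j s : is_leaf j s -> Pbarset S F k j (f j s) = set0.
Proof.
case/andP => _ /forallP leaf; apply/setP => c; rewrite in_set0.
apply/negbTE/PbarsetP => -[s' [x [_ pre neq]]].
by move: (leaf s'); rewrite pre eq_sym (negbTE neq).
Qed.

Lemma exists_take2_fstar i s : P0 2 (tau i s) != set0 ->
  exists x (c : 2.-tuple bool), take 2 (fstar i (s :: x)) = val c.
Proof.
case/set0Pn => c /P0P [s' [x hx]]; exists (s' :: x).
have le2 : (2 <= size (fstar (tau i s) (s' :: x)))%N.
  by have := congr1 size hx; rewrite size_tuple size_take; case: ltnP => [/ltnW|_ ->].
have size_take2 : size (take 2 (fstar i [:: s, s' & x])) == 2%N.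
  by rewrite size_takel // fstar_cons size_cat (leq_trans le2) ?leq_addl.
by exists (Tuple size_take2).
Qed.

Section TwoDecodable.
Hypothesis h2dec : is_2dec S F.
Hypothesis hF2 : forall i, (3 <= #|P0 2 i|)%N.

Lemma ct_f_inj i : injective (f i).
Proof.
move=> s s' e; apply/eqP; apply: contraT => ss'.
have := cardsUI (P0 2 (tau i s)) (P0 2 (tau i s')).
rewrite (h2dec.2 i s s' ss' e) cards0 addn0.
have := subset_leq_card (subsetT (P0 2 (tau i s) :|: P0 2 (tau i s'))).
by rewrite cardsT card_tuple2; have := hF2 (tau i s); have := hF2 (tau i s'); lia.
Qed.

Lemma exists_leaf j : (1 < #|S|)%N -> exists s, is_leaf j s.
Proof.
move=> hS; have /card_gt0P [s0 _] : (0 < #|S|)%N by apply: ltnW.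
have [s1 s10] := exists_neq s0 hS.
have [s2 s2_nil] : exists s, f j s != [::].
  case: (eqVneq (f j s0) [::]) => [f0|]; last by exists s0.
  by exists s1; rewrite -f0 (inj_eq (@ct_f_inj j)).
case: (@arg_maxnP _ s2 (fun s => f j s != [::]) (fun s => size (f j s)) s2_nil).
move=> s s_nil s_max.
exists s; rewrite /is_leaf s_nil; apply/forallP => s'; apply/implyP => pre.
have le_s_s' := size_prefix pre.
have /s_max le_s'_s : f j s' != [::].
  by rewrite -size_eq0 -lt0n (leq_trans _ le_s_s') // lt0n size_eq0.
move/prefixP: pre => [d e]; move: le_s'_s; rewrite e size_cat.
by case: d {e} => [|? ?] /=; rewrite ?cats0 // addnS ltnNge leq_addr.
Qed.

End TwoDecodable.
End CodeTuple.

Definition squeezable (a b : bool) (w : seq bool) :=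
  [/\ w != [::], w != [:: a] & forall x w', w = a :: x :: w' -> x = ~~ b].

Definition squeeze (a : bool) (w : seq bool) :=
  if w is x :: _ :: w' then if x == a then x :: w' else w else w.

Definition unsqueeze (a b : bool) (w : seq bool) :=
  if w is x :: w' then if x == a then x :: ~~ b :: w' else w else w.

Lemma squeezeK a b w : squeezable a b w -> unsqueeze a b (squeeze a w) = w.
Proof.
case: w => [|y [|x w]] [//= _ w_a w_ab] /=.
  by case: (eqVneq y a) w_a => [->|]; rewrite ?eqxx.
case: (eqVneq y a) => [ya|nya] /=; last by rewrite (negbTE nya).
by rewrite ya eqxx (w_ab x w) // ya.
Qed.

Lemma unsqueeze_cat a b u v : u != [::] -> unsqueeze a b (u ++ v) = unsqueeze a b u ++ v.
Proof. by case: u => [|x u] //= _; case: ifP. Qed.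

Lemma squeeze_eq_nil a w : (squeeze a w == [::]) = (w == [::]).
Proof. by case: w => [|x [|y w]] //=; case: ifP. Qed.

Lemma size_squeeze a w : (size (squeeze a w) <= size w)%N.
Proof. by case: w => [|x [|y w]] //=; case: ifP => //= _; rewrite ltnW. Qed.

Lemma take1_squeeze a w : take 1 (squeeze a w) = take 1 w.
Proof. by case: w => [|x [|y w]] //=; case: ifP; rewrite //= !take0. Qed.

Lemma squeeze_cat_inj a b w w' d : squeezable a b w -> squeezable a b w' ->
  squeeze a w' = squeeze a w ++ d -> w' = w ++ d.
Proof.
move=> sw sw' e; rewrite -(squeezeK sw') e unsqueeze_cat ?squeezeK //.
by rewrite squeeze_eq_nil; case: sw.
Qed.

Section MissingPair.
Variables (S : finType) (F : codetuple S) (i0 : 'I_(ct_m F).+1) (a b : bool).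
Hypothesis hS : (1 < #|S|)%N.
Hypothesis h2dec : is_2dec S F.
Hypothesis hF2 : forall i, (3 <= #|P0 S F 2 i|)%N.
Hypothesis P2_i0 : P0 S F 2 i0 = ~: [set [tuple a; b]].
Local Notation f := (ct_f F).
Local Notation tau := (ct_tau F).
Local Notation fstar := (fstar S F).
Local Notation P0 := (P0 S F).

Lemma P2_i0_second c : [tuple a; c] \in P0 2 i0 -> c = ~~ b.
Proof. by rewrite P2_i0 !inE eq_tuple2 eqxx; case: b c => -[]. Qed.

Lemma P2_i0_card_lt (A : {set 2.-tuple bool}) : A \proper P0 2 i0 -> (#|A| < 3)%N.
Proof. by move/proper_card; rewrite P2_i0 cardsC1 card_tuple2. Qed.

Lemma codeword_i0_neq_nil s : f i0 s != [::].
Proof.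
apply/eqP => f_nil; set t := tau i0 s.
suff /P2_i0_card_lt : P0 2 t \proper P0 2 i0 by have := hF2 t; lia.
apply/properP; split.
  apply/subsetP => c /P0P [s' [x hx]]; apply/P0P; exists s, (s' :: x).
  by rewrite fstar_cons f_nil.
have [s' s's] := exists_neq s hS.
have f_s' : f i0 s' != [::] by rewrite -f_nil (inj_eq (ct_f_inj h2dec hF2 (i:=i0))).
have [x [c hc]] : exists x (c : 2.-tuple bool), take 2 (fstar i0 (s' :: x)) = val c.
  by apply: exists_take2_fstar; rewrite -card_gt0; have := hF2 (tau i0 s'); lia.
exists c; first by apply/P0P; exists s', x.
apply: contraT; rewrite negbK => ct.
suff cbar : c \in Pbarset S F 2 i0 (f i0 s).
  by have := h2dec.1 i0 s; move/setP/(_ c); rewrite inE ct cbar in_set0.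
apply/PbarsetP; exists s', x; rewrite f_nil cat0s -hc prefix_take prefix0s.
by rewrite eq_sym.
Qed.

Lemma codeword_i0_neq_a s : f i0 s != [:: a].
Proof.
apply/eqP => f_a; set t := tau i0 s.
suff : (#|P0 2 t| <= 2)%N by have := hF2 t; lia.
have sub : P0 2 t \subset [set [tuple ~~ b; false]; [tuple ~~ b; true]].
  apply/subsetP => c /P0P [s' [x hx]]; have [c0 [c1 e]] := tuple2P c.
  have c0_nb : c0 = ~~ b.
    apply: P2_i0_second; apply/P0P; exists s, (s' :: x).
    by rewrite fstar_cons f_a /= -(take_takel _ (isT : (1 <= 2)%N)) hx e.
  by rewrite e c0_nb !inE !eq_tuple2 eqxx; case: c1 {e}.
by apply: (leq_trans (subset_leq_card sub)); rewrite cards2; case: (_ != _).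
Qed.

Lemma codeword_i0_second s x w : f i0 s = a :: x :: w -> x = ~~ b.
Proof.
move=> f_axw; apply: P2_i0_second; apply/P0P; exists s, [::].
by rewrite fstar_cons f_axw /= take0.
Qed.

Lemma codeword_i0_squeezable s : squeezable a b (f i0 s).
Proof.
split; [exact: codeword_i0_neq_nil | exact: codeword_i0_neq_a |].
exact: codeword_i0_second.
Qed.

Lemma exists_codeword_i0_long : exists s x w, f i0 s = a :: x :: w.
Proof.
have /P0P [s [x hx]] : [tuple a; ~~ b] \in P0 2 i0.
  by rewrite P2_i0 !inE eq_tuple2 eqxx; case: b.
have := codeword_i0_neq_nil s; have := codeword_i0_neq_a s.
move: hx; rewrite fstar_cons; case e: (f i0 s) => [|y [|x' w]] //=.
  by case=> ya _; rewrite ya eqxx.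
by case=> ya _ _ _; exists s, x', w; rewrite e ya.
Qed.

End MissingPair.

Section Shortening.
Variables (S : finType) (F : codetuple S) (i0 : 'I_(ct_m F).+1) (a b : bool).
Local Notation n := (ct_m F).+1.
Local Notation f := (ct_f F).
Local Notation tau := (ct_tau F).

(* Table k of F becomes table emb k of F_sh, and the new table is ord_max, a
   copy of table i0 with squeezed codewords; proj maps it back to i0. *)
Definition emb (k : 'I_n) : 'I_n.+1 := widen_ord (leqnSn n) k.
Definition proj (u : 'I_n.+1) : 'I_n := insubd i0 (val u).

Definition f_sh (u : 'I_n.+1) s :=
  if u == ord_max then squeeze a (f i0 s) else f (proj u) s.

(* Only leaf transitions into i0 are redirected to the new table: after a leaf
   the successor table is unconstrained by 2-decodability (Pbarset_leaf). *)
Definition tau_sh (u : 'I_n.+1) s : 'I_n.+1 :=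
  if (tau (proj u) s == i0) && is_leaf (proj u) s then ord_max
  else emb (tau (proj u) s).

Definition F_sh : codetuple S := @CodeTuple S n f_sh tau_sh.

Lemma fstar_sh_cons u s x :
  fstar S F_sh u (s :: x) = f_sh u s ++ fstar S F_sh (tau_sh u s) x.
Proof. by []. Qed.

Lemma proj_emb k : proj (emb k) = k.
Proof. by apply: val_inj; rewrite /proj val_insubd /= ltn_ord. Qed.

Lemma proj_max : proj ord_max = i0.
Proof. by apply: val_inj; rewrite /proj val_insubd /= ltnn. Qed.

Lemma emb_neq_max k : emb k != ord_max.
Proof. by rewrite -val_eqE /= neq_ltn ltn_ord. Qed.

Lemma emb_proj u : u != ord_max -> emb (proj u) = u.
Proof.
move=> u_max; apply: val_inj; rewrite /= /proj val_insubd.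
by rewrite ltn_neqAle -ltnS ltn_ord andbT -val_eqE in u_max *; rewrite u_max.
Qed.

Lemma proj_tau_sh u s : proj (tau_sh u s) = tau (proj u) s.
Proof.
by rewrite /tau_sh; case: ifP => [/andP [/eqP -> _]|_]; rewrite ?proj_max ?proj_emb.
Qed.

Lemma tau_sh_max u s : tau_sh u s = ord_max -> is_leaf (proj u) s.
Proof.
by rewrite /tau_sh; case: ifP => [/andP [] //|_ /eqP]; rewrite (negbTE (emb_neq_max _)).
Qed.

Lemma f_sh_nomax u s : u != ord_max -> f_sh u s = f (proj u) s.
Proof. by rewrite /f_sh => /negbTE ->. Qed.

Lemma f_sh_eq_nil u s : (f_sh u s == [::]) = (f (proj u) s == [::]).
Proof.
by rewrite /f_sh; case: (eqVneq u ord_max) => [->|_]; rewrite ?squeeze_eq_nil ?proj_max.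
Qed.

Lemma take1_f_sh u s : take 1 (f_sh u s) = take 1 (f (proj u) s).
Proof.
by rewrite /f_sh; case: (eqVneq u ord_max) => [->|_]; rewrite ?take1_squeeze ?proj_max.
Qed.

Lemma take1_fstar_sh u x : take 1 (fstar S F_sh u x) = take 1 (fstar S F (proj u) x).
Proof.
elim: x u => [|s x IH] u //; rewrite fstar_sh_cons fstar_cons.
have [f_nil|f_nnil] := eqVneq (f (proj u) s) [::].
  have f_sh_nil : f_sh u s = [::] by apply/eqP; rewrite f_sh_eq_nil f_nil.
  by rewrite f_sh_nil f_nil IH proj_tau_sh.
by rewrite !take1_cat ?take1_f_sh ?f_sh_eq_nil.
Qed.

Lemma take2_fstar_sh u x : u != ord_max ->
  take 2 (fstar S F_sh u x) = take 2 (fstar S F (proj u) x).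
Proof.
elim: x u => [|s x IH] u u_max //; rewrite fstar_sh_cons fstar_cons f_sh_nomax //.
case f_s: (f (proj u) s) => [|d [|d' w]] /=.
- rewrite IH ?proj_tau_sh //; apply: contraTneq isT => /tau_sh_max.
  by rewrite /is_leaf f_s eqxx.
- by rewrite take1_fstar_sh proj_tau_sh.
- by rewrite !take0.
Qed.

Lemma P1_sh u : P0 S F_sh 1 u = P0 S F 1 (proj u).
Proof.
apply/setP => c; apply/P0P/P0P => -[s [x h]]; exists s, x.
all: by rewrite -h take1_fstar_sh.
Qed.

Lemma P2_sh u : u != ord_max -> P0 S F_sh 2 u = P0 S F 2 (proj u).
Proof.
move=> u_max; apply/setP => c; apply/P0P/P0P => -[s [x h]]; exists s, x.
all: by rewrite -h take2_fstar_sh.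
Qed.

Section SqueezableI0.
Hypothesis f_i0_squeezable : forall s, squeezable a b (f i0 s).

Lemma f_sh_cat u s s' d : f_sh u s' = f_sh u s ++ d -> f (proj u) s' = f (proj u) s ++ d.
Proof.
rewrite /f_sh; case: (eqVneq u ord_max) => [->|//]; rewrite proj_max.
exact: squeeze_cat_inj.
Qed.

Lemma Pbarset_sh u s :
  Pbarset S F_sh 2 u (f_sh u s) \subset Pbarset S F 2 (proj u) (f (proj u) s).
Proof.
apply/subsetP => c /PbarsetP [s1 [x [pre_c /prefixP [d f_s1] neq]]].
change (f_sh u s1 = f_sh u s ++ d) in f_s1.
change (is_true (f_sh u s != f_sh u s1)) in neq.
have d_nnil : d != [::] by apply: contra neq => /eqP d_nil; rewrite f_s1 d_nil cats0.
have f_s1' := f_sh_cat f_s1.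
apply/PbarsetP; exists s1, x; split.
- move: pre_c; rewrite fstar_sh_cons fstar_cons f_s1 f_s1' -!catA.
  rewrite !prefix_catr // !eqxx /= !prefixE size_tuple => /eqP <-.
  by apply/eqP/take_cat_succ; rewrite // take1_fstar_sh proj_tau_sh.
- by rewrite f_s1' prefix_prefix.
- rewrite f_s1'; apply: contra d_nnil => /eqP/(congr1 size)/eqP.
  by rewrite size_cat -{1}[size _]addn0 eqn_add2l eq_sym size_eq0.
Qed.

Lemma F_sh_2dec : is_2dec S F -> (forall i, (3 <= #|P0 S F 2 i|)%N) -> is_2dec S F_sh.
Proof.
move=> h2dec hF2; split.
- move=> u s; apply/setP => c; rewrite in_setI in_set0.
  apply/negbTE/andP => -[c_tau c_bar].
  have := subsetP (Pbarset_sh u s) _ c_bar.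
  have [/tau_sh_max leaf|tau_max] := eqVneq (tau_sh u s) ord_max.
    by rewrite Pbarset_leaf // in_set0.
  move: c_tau; rewrite P2_sh // proj_tau_sh => c_tau c_bar'.
  by have := h2dec.1 (proj u) s; move/setP/(_ c); rewrite in_setI c_tau c_bar' in_set0.
- move=> u s s' /negP ss' e; exfalso; apply/ss'/eqP/(ct_f_inj h2dec hF2 (i:=proj u)).
  by rewrite (@f_sh_cat u s' s [::]) ?cats0.
Qed.

End SqueezableI0.

Lemma F_sh_ext : is_ext S F -> is_ext S F_sh.
Proof. by move=> hext u; rewrite P1_sh. Qed.

End Shortening.

Section ShortenedStationary.
Variables (R : realType) (S : finType) (mu : S -> R).
Variables (F : codetuple S) (i0 : 'I_(ct_m F).+1) (a : bool).
Hypothesis mu_gt0 : forall s, 0 < mu s.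
Hypothesis sum_mu : \sum_s mu s = 1.
Local Notation n := (ct_m F).+1.
Local Notation f := (ct_f F).
Local Notation tau := (ct_tau F).
Local Notation F_sh := (F_sh i0 a).
Local Notation proj := (proj i0).
Local Notation emb := (@emb S F).
Local Notation Qmat := (Qmat S R mu).
Local Notation stationary := (stationary S R mu).
Local Notation Lw := (Lw S R mu).

Definition proj_distr (p : 'I_n.+1 -> R) (k : 'I_n) : R :=
  p (emb k) + (i0 == k)%:R * p ord_max.

Lemma sum_proj_distr (p : 'I_n.+1 -> R) (h : 'I_n -> R) :
  \sum_v p v * h (proj v) = \sum_k proj_distr p k * h k.
Proof.
rewrite big_ord_recr /= proj_max.
under [RHS]eq_bigr do rewrite mulrDl.
rewrite big_split /=; congr (_ + _); first by apply: eq_bigr => k _; rewrite proj_emb.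
under [RHS]eq_bigr do rewrite mulrAC.
by rewrite -mulr_suml sumr_delta mulrC.
Qed.

Lemma Qmat_proj v j : Qmat F (proj v) j = \sum_w Qmat F_sh v w * (proj w == j)%:R.
Proof.
rewrite /Qmat (partition_big (tau_sh i0 v) predT) //=.
apply: eq_bigr => w _; case: eqP => [<-|pw_j]; rewrite ?mulr1 ?mulr0.
  by apply: eq_bigl => s; rewrite -proj_tau_sh andb_idl // => /eqP ->.
rewrite big_pred0 // => s; apply/negbTE/andP => -[/eqP e /eqP e_w].
by apply: pw_j; rewrite -e_w proj_tau_sh.
Qed.

Lemma proj_distr_stationary p : stationary F_sh p -> stationary F (proj_distr p).
Proof.
case=> p_inv sum_p; split.
- move=> j; rewrite -(sum_proj_distr p (fun k => Qmat F k j)).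
  under eq_bigr do rewrite Qmat_proj mulr_sumr.
  rewrite exchange_big /=.
  under eq_bigr do under eq_bigr do rewrite mulrA.
  under eq_bigr do rewrite -mulr_suml p_inv.
  rewrite (sum_proj_distr p (fun k => (k == j)%:R)).
  by under eq_bigr do rewrite mulrC eq_sym; rewrite sumr_delta.
- rewrite -sum_p; under eq_bigr do rewrite -[proj_distr p _]mulr1.
  by rewrite -(sum_proj_distr p (fun=> 1)); under eq_bigr do rewrite mulr1.
Qed.

Lemma stationary_sh_max p : stationary F_sh p ->
  p ord_max = \sum_k proj_distr p k * Qmat F_sh (emb k) ord_max.
Proof.
case=> p_inv _; rewrite -p_inv -(sum_proj_distr p (fun k => Qmat F_sh (emb k) ord_max)).
by apply: eq_bigr => v _; congr (_ * _); apply: eq_bigl => s; rewrite /= /tau_sh proj_emb.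
Qed.

Lemma F_sh_reg : is_reg S R mu F -> is_reg S R mu F_sh.
Proof.
move=> reg; have [p [st _]] := exists_stationary mu_gt0 sum_mu F_sh.
exists p; split=> // p' st'.
have e := reg_stationary_uniq reg (proj_distr_stationary st) (proj_distr_stationary st').
have e_max : p ord_max = p' ord_max.
  by rewrite (stationary_sh_max st) (stationary_sh_max st') e.
apply: funext => v; have [->//|v_max] := eqVneq v ord_max.
rewrite -(emb_proj i0 v_max).
by move/(congr1 (fun q => q (proj v))): e; rewrite /proj_distr e_max => /addIr.
Qed.

Lemma Lw_proj_distr p : Lw F (proj_distr p) = Lw F_sh p +
  p ord_max * \sum_s ((size (f i0 s))%:R - (size (squeeze a (f i0 s)))%:R) * mu s.
Proof.
rewrite /Lw -sum_proj_distr [LHS]big_ord_recr [in RHS]big_ord_recr /= proj_max.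
rewrite -addrA -mulrDr; congr (_ + _ * _).
  apply: eq_bigr => k _; congr (_ * _); apply: eq_bigr => s _.
  by rewrite f_sh_nomax ?emb_neq_max // proj_emb.
rewrite -big_split /=; apply: eq_bigr => s _.
by rewrite /f_sh eqxx -mulrDl addrC subrK.
Qed.

Lemma squeeze_gain_gt0 : (exists s x w, f i0 s = a :: x :: w) ->
  0 < \sum_s ((size (f i0 s))%:R - (size (squeeze a (f i0 s)))%:R) * mu s.
Proof.
move=> [s1 [x [w f_s1]]].
have gain_ge0 s : 0 <= ((size (f i0 s))%:R - (size (squeeze a (f i0 s)))%:R) * mu s.
  by rewrite mulr_ge0 ?subr_ge0 ?ler_nat ?size_squeeze // ltW.
apply: lt_le_trans (ler_term_sum s1 gain_ge0).
by rewrite f_s1 /= eqxx -natrB // subSnn mul1r.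
Qed.

Lemma stationary_sh_max_gt0 p j s0 : stationary F_sh p -> (forall v, 0 <= p v) ->
  0 < proj_distr p j -> is_leaf j s0 -> tau j s0 = i0 -> 0 < p ord_max.
Proof.
move=> st p_ge0 p_j leaf_s0 tau_s0; rewrite (stationary_sh_max st).
have term_ge0 k : 0 <= proj_distr p k * Qmat F_sh (emb k) ord_max.
  by rewrite mulr_ge0 ?Qmat_ge0 // addr_ge0 ?mulr_ge0.
apply: lt_le_trans (ler_term_sum j term_ge0); rewrite mulr_gt0 //.
have tau_sh_s0 : tau_sh i0 (emb j) s0 = ord_max.
  by rewrite /tau_sh proj_emb tau_s0 eqxx leaf_s0.
have := Qmat_ge_mu mu_gt0 (emb j : 'I_(ct_m F_sh).+1) s0.
by rewrite /= tau_sh_s0; apply: lt_le_trans.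
Qed.

End ShortenedStationary.

Unset Implicit Arguments.

Theorem lemma24 (R : realType) (S : finType) (mu : S -> R)
  (hS : (2 <= #|S|)%N)
  (hmu : forall s, 0 < mu s <= 1)
  (hsum : \sum_s mu s = 1)
  (F : codetuple S) :
  in_Fopt S R mu F -> in_F2 S R mu F ->
  exists i : 'I_(ct_m F).+1, RF S F i /\ #|P0 S F 2 i| = 4%N.
Proof.
move=> [[reg [hext h2dec]] opt] [_ [_ hF2]].
have mu_gt0 s : 0 < mu s by case/andP: (hmu s).
apply: contrapT => no_recurrent4.
have [pi [st pi_ge0]] := exists_stationary mu_gt0 hsum F.
have [j /andP [_ pi_j]] : exists j, true && (0 < pi j).
  by apply: psumr_neq0P => [i _|]; rewrite ?pi_ge0 // st.2; apply/eqP; rewrite oner_eq0.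
have [s0 leaf_s0] := exists_leaf h2dec hF2 j hS.
set i0 := ct_tau F j s0.
have rec_i0 : RF S F i0.
  exact/(reg_stationary_recurrent mu_gt0 hsum reg st)/lt0r_neq0/stationary_tau_gt0.
have [a [b P2_i0]] : exists a b, P0 S F 2 i0 = ~: [set [tuple a; b]].
  apply: card3_tuple2; have := hF2 i0; have : #|P0 S F 2 i0| != 4%N.
    by apply/eqP => card4; apply: no_recurrent4; exists i0.
  by have := max_card (P0 S F 2 i0); rewrite card_tuple2; lia.
have i0_squeezable := codeword_i0_squeezable hS h2dec hF2 P2_i0.
have [p [st_sh p_ge0]] := exists_stationary mu_gt0 hsum (F_sh i0 a).
have F0_sh : in_F0 S R mu (F_sh i0 a).
  split; first exact: F_sh_reg.
  by split; [exact: F_sh_ext | exact: F_sh_2dec i0_squeezable h2dec hF2].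
have pi_proj := reg_stationary_uniq reg st (proj_distr_stationary st_sh).
move: (opt _ F0_sh pi p st st_sh); apply/negP.
rewrite -ltNge pi_proj (Lw_proj_distr mu i0 a) ltrDl mulr_gt0 //.
  apply: (stationary_sh_max_gt0 mu_gt0 st_sh p_ge0 _ leaf_s0) => //.
  by move: pi_j; rewrite pi_proj.
exact: squeeze_gain_gt0 mu_gt0 (exists_codeword_i0_long hS h2dec hF2 P2_i0).
Qed.
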